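(* Let $\pi\in\mathfrak{S}_n$ avoid $231$. If $(a,b)$ and $(c,d)$ are $2$-cycles in the disjoint cycle decomposition of $\pi$ with $a<b$, $c<d$ and $a<c$, then either $b<c$ or $b>d$.
   Context: A permutation avoids $231$ if there are no indices $i<j<k$ with $\pi_k<\pi_i<\pi_j$. *)

From mathcomp Require Import all_boot all_fingroup.
Set Implicit Arguments. Unset Strict Implicit. Unset Printing Implicit Defensive.

(* A permutation s of 'I_n (the indices 0..n-1 stand for 1..n) avoids 231 if
   there are no indices i < j < k with s k < s i < s j. *)
Definition avoids231 (n : nat) (s : 'S_n) : Prop :=
  forall i j k : 'I_n, i < j -> j < k -> ~ (s k < s i < s j).

From mathcomp Require Import all_boot all_fingroup.

Theorem lemma3p2 (n : nat) (s : 'S_n) (a b c d : 'I_n) :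
  avoids231 s ->
  s a = b -> s b = a -> s c = d -> s d = c ->
  a < b -> c < d -> a < c ->
  b < c \/ d < b.
Proof.
move=> av sa sb sc sd ab cd ac.
have b_neq_c : b != c.
  by apply: contraTneq (ltn_trans ac cd) => bc; rewrite -sc -bc sb ltnn.
have b_neq_d : b != d by apply: contraTneq ac => bd; rewrite -sd -bd sb ltnn.
case: (ltnP b c) => [|c_le_b]; [by left | right].
have c_lt_b : c < b by rewrite ltn_neqAle eq_sym b_neq_c.
case: (ltngtP d b) => [// | b_lt_d | /val_inj d_eq_b]; last first.
  by rewrite d_eq_b eqxx in b_neq_d.
(* Positions a < c < b carry the values b, d, a: an occurrence of 231. *)
by case: (av a c b ac c_lt_b); rewrite sb sa sc ab b_lt_d.
Qed.
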